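(* Let $t$ be a positive integer and $\lambda=\{k_1,\dots,k_q\}$ a multiset of positive integers. Suppose there are $K_t$-minor-free graphs $H_1$ and $H_2$, a clique $K=\{v_1,\dots,v_p\}$ in $H_1$, a $q$-tuple $\mathcal{C}=(C_1,\dots,C_q)$ of pairwise disjoint colour sets, and a $(\lambda,\mathcal{C})$-list assignment $L$ of $H_2$ such that: for every $L$-colouring $\psi$ of $H_2$, there is a $p$-clique $K_\psi=\{v_{\psi,1},\dots,v_{\psi,p}\}$ in $H_2$ such that there exists a $\psi|_{K_\psi}$-obstacle $L_\psi$ for $(H_1,K,\mathcal{C})$ (where $\psi|_{K_\psi}$ is regarded as a proper colouring of the $p$-clique $K_\psi$ with vertices ordered $v_{\psi,1},\dots,v_{\psi,p}$). Then there is a $K_t$-minor-free graph $G$ that is not $\lambda$-choosable.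
   Context: All graphs are finite and simple. A graph is $K_t$-minor-free if $K_t$ cannot be obtained from a subgraph of it by contracting edges. A list assignment $L$ of $G$ assigns to each vertex $v$ a set $L(v)$ of colours; an $L$-colouring is a proper colouring $f$ with $f(v)\in L(v)$ for all $v$. For a multiset $\lambda=\{k_1,\dots,k_q\}$ of positive integers, a $\lambda$-list assignment of $G$ is a list assignment $L$ such that $\bigcup_{v}L(v)$ can be partitioned into $q$ sets $C_1,\dots,C_q$ with $|L(v)\cap C_i|\ge k_i$ for all $i$ and $v$; $G$ is $\lambda$-choosable if it is $L$-colourable for every $\lambda$-list assignment $L$. Given a $q$-tuple $\mathcal{C}=(C_1,\dots,C_q)$ of disjoint colour sets, a $(\lambda,\mathcal{C})$-list assignment of a graph $G$ is a list assignment $L$ with $|L(v)\cap C_i|\ge k_i$ for every vertex $v$ and every $i$. If $K=\{v_1,\dots,v_p\}$ is a clique in $G$, $K'=\{v'_1,\dots,v'_p\}$ is a $p$-clique (disjoint from $G$) and $\psi'$ is a proper colouring of $K'$, then a $(\lambda,\mathcal{C})$-list assignment $L$ of $G$ is a $\psi'$-obstacle for $(G,K,\mathcal{C})$ if the colouring $\psi$ of $K$ given by $\psi(v_i)=\psi'(v'_i)$ is an $L$-colouring of $K$ that cannot be extended to a proper $L$-colouring of $G$. *)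

From mathcomp Require Import all_boot.
Set Implicit Arguments. Unset Strict Implicit. Unset Printing Implicit Defensive.

Definition simple_graph (V : finType) (e : rel V) : Prop :=
  (forall x y, e x y = e y x) /\ (forall x, ~~ e x x).

Definition connected_in (V : finType) (e : rel V) (B : {set V}) : Prop :=
  forall x y, x \in B -> y \in B ->
    connect [rel u v | [&& u \in B, v \in B & e u v]] x y.

(* G has a K_t minor: branch sets B_1..B_t, nonempty, connected, pairwise
   disjoint, pairwise joined by an edge (contract each B_i to a vertex). *)
Definition has_K_minor (V : finType) (e : rel V) (t : nat) : Prop :=
  exists B : 'I_t -> {set V},
    [/\ forall i, B i != set0,
        forall i, connected_in e (B i),
        forall i j, i != j -> [disjoint B i & B j] &
        forall i j, i != j -> exists x y, [/\ x \in B i, y \in B j & e x y]].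

Definition K_minor_free (V : finType) (e : rel V) (t : nat) : Prop :=
  ~ has_K_minor e t.

Definition proper_col (V Col : finType) (e : rel V) (f : V -> Col) : Prop :=
  forall x y, e x y -> f x != f y.

Definition L_colouring (V Col : finType) (e : rel V) (L : V -> {set Col})
  (f : V -> Col) : Prop :=
  proper_col e f /\ forall v, f v \in L v.

Definition is_clique (V : finType) (e : rel V) (p : nat) (K : 'I_p -> V) : Prop :=
  injective K /\ forall i j, i != j -> e (K i) (K j).

(* multiset lambda = {k_1,..,k_q} given by k : 'I_q -> nat *)
Definition lambdaC_assignment (V Col : finType) (q : nat) (k : 'I_q -> nat)
  (C : 'I_q -> {set Col}) (L : V -> {set Col}) : Prop :=
  forall v i, k i <= #|L v :&: C i|.

Definition lambda_assignment (V Col : finType) (q : nat) (k : 'I_q -> nat)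
  (L : V -> {set Col}) : Prop :=
  exists C : 'I_q -> {set Col},
    [/\ forall i j, i != j -> [disjoint C i & C j],
        \bigcup_i C i = \bigcup_v L v &
        lambdaC_assignment k C L].

Definition lambda_choosable (V : finType) (e : rel V) (q : nat)
  (k : 'I_q -> nat) : Prop :=
  forall (Col : finType) (L : V -> {set Col}),
    lambda_assignment k L -> exists f, L_colouring e L f.

(* psi'-obstacle for (G, K, C): psi' given by c : 'I_p -> Col (c i = psi'(v'_i)). *)
Definition obstacle (V Col : finType) (e : rel V) (p : nat) (K : 'I_p -> V)
  (q : nat) (k : 'I_q -> nat) (C : 'I_q -> {set Col})
  (c : 'I_p -> Col) (L : V -> {set Col}) : Prop :=
  [/\ lambdaC_assignment k C L,
      (forall i, c i \in L (K i)) /\ (forall i j, e (K i) (K j) -> c i != c j) &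
      ~ exists f, L_colouring e L f /\ forall i, f (K i) = c i].

(* Glue onto H2, for every L-colouring psi of H2, a copy of H1 in which K is
   identified with the clique K_psi, and give that copy the lists L_psi.
   The result is a clique-sum of K_t-minor-free graphs, hence K_t-minor-free:
   in a K_t model either every branch set meets H2, or some branch set lies
   inside a single copy and then every branch set meets that copy; contracting
   each component outside H2 (resp. outside the copy) onto the clique it hangs
   from turns the model into one of H2 (resp. H1).  Cut down to the union of
   the C_i, the lists form a lambda-assignment; a colouring from them restricts
   to an L-colouring psi of H2 and to an extension of psi on K_psi to the copy
   of H1 with lists L_psi, which the obstacle L_psi forbids. *)

From mathcomp Require Import all_boot boolp.
Set Implicit Arguments. Unset Strict Implicit. Unset Printing Implicit Defensive.

Definition induced (T : finType) (r : rel T) (B : {set T}) : rel T :=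
  [rel u v | [&& u \in B, v \in B & r u v]].

Definition K_minor_model (T : finType) (r : rel T) (t : nat) (B : 'I_t -> {set T}) :=
  [/\ forall i, B i != set0, forall i, connected_in r (B i),
      forall i j, i != j -> [disjoint B i & B j] &
      forall i j, i != j -> exists x y, [/\ x \in B i, y \in B j & r x y]].

Section Retract.

(* [A y] is the clique of [W] onto which the component of [y] outside the image
   of [g] gets contracted. *)
Variables (V W : finType) (e : rel V) (eW : rel W) (g : W -> V) (A : V -> {set W}).

Hypothesis e_sym : forall x y, e x y = e y x.
Hypothesis g_inj : injective g.
Hypothesis g_edge : forall a b, e (g a) (g b) = eW a b.
Hypothesis A_clique :
  forall y a b, y \notin codom g -> a \in A y -> b \in A y -> a != b -> eW a b.
Hypothesis A_edge :
  forall y z, y \notin codom g -> z \notin codom g -> e y z -> A y = A z.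
Hypothesis A_nbr : forall y a, y \notin codom g -> e y (g a) -> a \in A y.

Definition shadow (v : V) : {set W} :=
  if v \in codom g then g @^-1: [set v] else A v.

Lemma shadow_image a : shadow (g a) = [set a].
Proof.
rewrite /shadow codom_f; apply/setP => b; rewrite !inE.
by apply/eqP/eqP => [/g_inj | ->].
Qed.

Lemma shadow_out y : y \notin codom g -> shadow y = A y.
Proof. by move=> /negbTE yg; rewrite /shadow yg. Qed.

Lemma shadow_out_edge y z : y \notin codom g -> e y z -> shadow z \subset shadow y.
Proof.
move=> yg eyz; rewrite (shadow_out yg).
have [/codomP [b zb] | zg] := boolP (z \in codom g).
  by subst z; rewrite shadow_image sub1set; apply: A_nbr.
by rewrite (shadow_out zg) (A_edge yg zg eyz).
Qed.

Lemma shadow_edge x y a b :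
  e x y -> a \in shadow x -> b \in shadow y -> (a == b) || eW a b.
Proof.
have in_clique u c d :
    u \notin codom g -> c \in shadow u -> d \in shadow u -> (c == d) || eW c d.
  move=> ug; rewrite shadow_out // => cu du.
  by have [-> | ne] := eqVneq c d; rewrite ?eqxx // (A_clique ug cu du ne) orbT.
move=> exy xa_in yb_in.
have [/codomP [a' xa] | xg] := boolP (x \in codom g); last first.
  exact: in_clique xg xa_in (subsetP (shadow_out_edge xg exy) _ yb_in).
have [/codomP [b' yb] | yg] := boolP (y \in codom g); last first.
  rewrite e_sym in exy.
  have := in_clique _ _ _ yg yb_in (subsetP (shadow_out_edge yg exy) _ xa_in).
  by rewrite eq_sym -!g_edge e_sym.
subst; move: xa_in yb_in; rewrite !shadow_image !inE => /eqP -> /eqP ->.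
by rewrite -g_edge exy orbT.
Qed.

Lemma shadow_connect (B : {set V}) b x :
  g b \in B -> x \in B -> connect (induced e B) x (g b) ->
  exists2 a, a \in shadow x :&: g @^-1: B & connect (induced eW (g @^-1: B)) a b.
Proof.
move=> gbB + /connectP [s]; elim: s x => [|y s IH] x xB /=.
  by move=> _ <-; exists b; rewrite // shadow_image !inE eqxx.
case/andP=> /and3P [_ yB exy] ys /(IH y yB ys) [c /setIP [cy cB] cb].
have [/codomP [a xa] | xg] := boolP (x \in codom g); last first.
  by exists c; rewrite // inE cB andbT; apply: subsetP (shadow_out_edge xg exy) _ cy.
subst x; exists a; first by rewrite shadow_image !inE eqxx.
have [-> // | ac] := eqVneq a c.
have /(shadow_edge exy)/(_ cy) : a \in shadow (g a) by rewrite shadow_image set11.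
rewrite (negbTE ac) /= => eac.
apply: connect_trans cb; apply: connect1.
by rewrite /induced /= cB eac inE xB.
Qed.

Lemma retract_K_minor t (B : 'I_t -> {set V}) :
  K_minor_model e B -> (forall i, exists a, g a \in B i) -> has_K_minor eW t.
Proof.
case=> _ Bconn Bdisj Badj Bmeet.
have shadowB i x : x \in B i -> exists2 a, a \in shadow x & g a \in B i.
  move=> xB; have [b gb] := Bmeet i.
  have [a /setIP [ax]] := shadow_connect gb xB (Bconn i _ _ xB gb).
  by rewrite inE => aB _; exists a.
exists (fun i => g @^-1: B i); split.
- by move=> i; have [a ga] := Bmeet i; apply/set0Pn; exists a; rewrite inE.
- move=> i a b; rewrite !inE => ga gb.
  have [c] := shadow_connect gb ga (Bconn i _ _ ga gb).
  by rewrite shadow_image inE => /andP [/set1P ->].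
- move=> i j ij; rewrite -setI_eq0 -preimsetI.
  by rewrite (disjoint_setI0 (Bdisj i j ij)) preimset0.
move=> i j ij; have [x [y [xB yB exy]]] := Badj i j ij.
have [a ax ga] := shadowB i x xB; have [b yb gb] := shadowB j y yB.
exists a, b; split; rewrite ?inE //.
have ab : a != b by apply: contraTneq gb => <-; rewrite (disjointFr (Bdisj i j ij) ga).
by have := shadow_edge exy ax yb; rewrite (negbTE ab).
Qed.

End Retract.

Lemma lambda_assignment_restrict (V Col : finType) (q : nat) (k : 'I_q -> nat)
    (C : 'I_q -> {set Col}) (L : V -> {set Col}) :
  (forall i j, i != j -> [disjoint C i & C j]) -> lambdaC_assignment k C L ->
  lambda_assignment k (fun v => L v :&: \bigcup_i C i).
Proof.
move=> Cdisj LC; set L' := fun v => _.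
exists (fun i => C i :&: \bigcup_v L' v); split.
- by move=> i j ij; apply: disjointW (Cdisj i j ij); apply: subsetIl.
- apply/setP => c; apply/bigcupP/bigcupP => [[i _ /setIP [_ /bigcupP //]] | [v _ cv]].
  have /setIP [_ /bigcupP [i _ ci]] := cv.
  by exists i; rewrite // inE ci; apply/bigcupP; exists v.
move=> v i; apply: leq_trans (LC v i) (subset_leq_card _).
apply/subsetP => c /setIP [cv ci].
have cL' : c \in L' v by rewrite inE cv; apply/bigcupP; exists i.
by rewrite !inE ci cv /=; apply/andP; split; apply/bigcupP; [exists i | exists v].
Qed.

Lemma clique_edge (T : finType) (r : rel T) (p : nat) (Q : 'I_p -> T) :
  simple_graph r -> is_clique r Q -> forall i j, r (Q i) (Q j) = (i != j).
Proof.
move=> [_ irr] [_ adj] i j; have [-> | ij] := eqVneq i j; last exact: adj.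
exact/negbTE/irr.
Qed.

Section Glue.

(* One copy of [H1 - K] per [phi : Phi], attached to [H2] by identifying
   [K i] with [KK phi i]. *)
Variables (Phi V1 V2 : finType) (e1 : rel V1) (e2 : rel V2) (p : nat)
  (K : 'I_p -> V1) (KK : Phi -> 'I_p -> V2).

Definition copy_vertex : finType := {y : Phi * V1 | y.2 \notin codom K}.

Definition glue_vertex : finType := (V2 + copy_vertex)%type.

Definition glue_rel : rel glue_vertex := fun u v =>
  match u, v with
  | inl a, inl b => e2 a b
  | inr x, inr y => ((val x).1 == (val y).1) && e1 (val x).2 (val y).2
  | inr x, inl b => [exists i, (b == KK (val x).1 i) && e1 (val x).2 (K i)]
  | inl a, inr y => [exists i, (a == KK (val y).1 i) && e1 (val y).2 (K i)]
  end.

Definition codom_K_dec (x : V1) : {i | K i = x} + {x \notin codom K}.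
Proof.
have [xK | xK] := boolP (x \in codom K); last by right.
by left; exists (iinv xK); apply: f_iinv.
Defined.

Definition embed (phi : Phi) (x : V1) : glue_vertex :=
  match codom_K_dec x with
  | inleft (exist i _) => inl (KK phi i)
  | inright xK => inr (Sub (phi, x) xK)
  end.

Hypothesis e1_simple : simple_graph e1.
Hypothesis e2_simple : simple_graph e2.
Hypothesis K_clique : is_clique e1 K.
Hypothesis KK_clique : forall phi, is_clique e2 (KK phi).

Lemma embed_K phi i : embed phi (K i) = inl (KK phi i).
Proof.
rewrite /embed; case: codom_K_dec => [[j /(proj1 K_clique) -> //] | ].
by move=> /negP[]; apply: codom_f.
Qed.

Lemma embed_out phi x (xK : x \notin codom K) : embed phi x = inr (Sub (phi, x) xK).
Proof.
rewrite /embed; case: codom_K_dec => [[i Kix] | xK']; last by congr inr; apply: val_inj.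
by subst x; case/negP: xK; apply: codom_f.
Qed.

Lemma embed_copy (z : copy_vertex) : embed (val z).1 (val z).2 = inr z.
Proof.
rewrite (embed_out _ (valP z)); congr inr.
by apply: val_inj; rewrite SubK -surjective_pairing.
Qed.

Lemma glue_sym x y : glue_rel x y = glue_rel y x.
Proof.
have [e1_sym _] := e1_simple; have [e2_sym _] := e2_simple.
by case: x y => [a | x] [b | y] //=; rewrite ?e2_sym // eq_sym e1_sym.
Qed.

Lemma glue_simple : simple_graph glue_rel.
Proof.
split; first exact: glue_sym.
have [_ e1_irr] := e1_simple; have [_ e2_irr] := e2_simple.
by case=> [a | x] /=; rewrite ?e2_irr // eqxx e1_irr.
Qed.

Lemma embed_edge phi x y : glue_rel (embed phi x) (embed phi y) = e1 x y.
Proof.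
have [e1_sym _] := e1_simple.
have mixed i v :
    v \notin codom K -> glue_rel (embed phi (K i)) (embed phi v) = e1 (K i) v.
  move=> vK; rewrite embed_K (embed_out _ vK) /= e1_sym.
  apply/existsP/idP => [[j /andP [/eqP /(proj1 (KK_clique phi)) ->]] // | ?].
  by exists i; rewrite eqxx.
have [/codomP [i ->] | xK] := boolP (x \in codom K);
  have [/codomP [j ->] | yK] := boolP (y \in codom K).
- by rewrite !embed_K /= !clique_edge.
- exact: mixed.
- by rewrite glue_sym e1_sym mixed.
- by rewrite !embed_out /= eqxx.
Qed.

Lemma embed_inj phi : injective (embed phi).
Proof.
move=> x y.
have [/codomP [i ->] | xK] := boolP (x \in codom K);
  have [/codomP [j ->] | yK] := boolP (y \in codom K).
- by rewrite !embed_K => [[/(proj1 (KK_clique phi)) ->]].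
- by rewrite embed_K (embed_out _ yK).
- by rewrite embed_K (embed_out _ xK).
- by rewrite (embed_out _ xK) (embed_out _ yK) => [[]].
Qed.

Lemma copy_nbr (z : copy_vertex) v :
  glue_rel (inr z) v -> v \in codom (embed (val z).1).
Proof.
case: v => [b | y] /=.
  by case/existsP => i /andP [/eqP -> _]; rewrite -embed_K codom_f.
by case/andP => /eqP -> _; rewrite -embed_copy codom_f.
Qed.

Lemma copy_component (B : {set glue_vertex}) (z0 : copy_vertex) :
  connected_in glue_rel B -> (forall a, inl a \notin B) -> inr z0 \in B ->
  forall v, v \in B -> exists2 z, v = inr z & (val z).1 = (val z0).1.
Proof.
move=> Bconn noH2 z0B v vB.
pose P := [pred u : glue_vertex | if u is inr z then (val z).1 == (val z0).1 else false].
have P_closed : closed (induced glue_rel B) P.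
  move=> u w /and3P [uB wB].
  case: u uB => [a | x] uB; first by rewrite (negbTE (noH2 a)) in uB.
  case: w wB => [b | y] wB; first by rewrite (negbTE (noH2 b)) in wB.
  by case/andP => /eqP xy _; rewrite !inE /= xy.
have := closed_connect P_closed (Bconn _ _ z0B vB); rewrite !inE /= eqxx.
case: v vB => [a | z] vB; first by rewrite (negbTE (noH2 a)) in vB.
by move=> /esym /eqP zphi; exists z.
Qed.

Lemma glue_K_minor_base t (B : 'I_t -> {set glue_vertex}) :
  K_minor_model glue_rel B -> (forall i, exists a, inl a \in B i) -> has_K_minor e2 t.
Proof.
pose attach (v : glue_vertex) : {set V2} :=
  if v is inr z then [set a in codom (KK (val z).1)] else set0.
apply: (@retract_K_minor _ _ _ _ inl attach glue_sym (@inl_inj _ _) (fun _ _ => erefl)).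
- case=> [y | z] a b; first by rewrite codom_f.
  move=> _; rewrite !inE => /codomP [i ->] /codomP [j ->] ij.
  by apply: (proj2 (KK_clique _)); apply: contraNneq ij => ->.
- case=> [y | z]; first by rewrite codom_f.
  case=> [y | z']; first by rewrite codom_f.
  by move=> _ _ /andP [/eqP zz' _]; rewrite /= zz'.
- case=> [y | z] a; first by rewrite codom_f.
  by move=> _ /existsP [i /andP [/eqP -> _]]; rewrite inE codom_f.
Qed.

Lemma glue_K_minor_copy t (B : 'I_t -> {set glue_vertex}) i0 :
  K_minor_model glue_rel B -> (forall a, inl a \notin B i0) -> has_K_minor e1 t.
Proof.
move=> model noH2; have [Bne Bconn _ Badj] := model.
have [[a aB | z0 z0B]] := set0Pn _ (Bne i0); first by move: (noH2 a); rewrite aB.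
set phi := (val z0).1; have inB0 := copy_component (Bconn i0) noH2 z0B.
apply: (@retract_K_minor _ _ _ _ (embed phi) (fun _ => [set x in codom K])
  glue_sym (@embed_inj phi) (embed_edge phi) _ _ _ _ _ model).
- move=> _ a b _; rewrite !inE => /codomP [i ->] /codomP [j ->] ij.
  by apply: (proj2 K_clique); apply: contraNneq ij => ->.
- by [].
- move=> y a yphi; have [aK | aK] := boolP (a \in codom K); first by rewrite inE.
  by rewrite (embed_out _ aK) glue_sym => /copy_nbr; rewrite SubK (negbTE yphi).
move=> j; have [-> | ji0] := eqVneq j i0; first by exists (val z0).2; rewrite embed_copy.
have i0j : i0 != j by rewrite eq_sym.
have [u [v [uB vB euv]]] := Badj i0 j i0j.
have [z uz zphi] := inB0 u uB; subst u.
have /codomP [x vx] := copy_nbr euv.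
by exists x; rewrite /phi -zphi -vx.
Qed.

Lemma glue_K_minor_free t :
  K_minor_free e1 t -> K_minor_free e2 t -> K_minor_free glue_rel t.
Proof.
move=> mf1 mf2 [B model].
have [meetH2 | /forallPn [i0 /existsPn noH2]] :=
  boolP [forall i, [exists a, inl a \in B i]].
  by apply/mf2/(glue_K_minor_base model) => i; apply/existsP/(forallP meetH2).
exact/mf1/(glue_K_minor_copy model noH2).
Qed.

Definition glue_lists (Col : finType) (L : V2 -> {set Col}) (LL : Phi -> V1 -> {set Col})
    (v : glue_vertex) : {set Col} :=
  match v with inl a => L a | inr z => LL (val z).1 (val z).2 end.

Lemma glue_not_lambda_choosable (Col : finType) (q : nat) (k : 'I_q -> nat)
    (C : 'I_q -> {set Col}) (L : V2 -> {set Col}) (LL : Phi -> V1 -> {set Col}) :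
  (forall i j, i != j -> [disjoint C i & C j]) ->
  lambdaC_assignment k C L -> (forall phi, lambdaC_assignment k C (LL phi)) ->
  (forall psi, L_colouring e2 L psi ->
     exists phi, obstacle e1 K k C (fun i => psi (KK phi i)) (LL phi)) ->
  ~ lambda_choosable glue_rel k.
Proof.
move=> Cdisj LC LLC obst choosable.
have glue_LC : lambdaC_assignment k C (glue_lists L LL).
  by case=> [a | z] i; [apply: LC | apply: LLC].
have [f [f_proper f_in]] := choosable _ _ (lambda_assignment_restrict Cdisj glue_LC).
have f_lists v : f v \in glue_lists L LL v by have /setIP [] := f_in v.
have [phi [_ [K_in _] no_ext]] : exists phi,
    obstacle e1 K k C (fun i => f (inl (KK phi i))) (LL phi).
  apply: (obst (fun a => f (inl a))).
  by split => [a b ab | a]; [apply: f_proper | apply: f_lists].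
apply: no_ext; exists (f \o embed phi); split; last by move=> i /=; rewrite embed_K.
split => [x y xy | x] /=; first by apply: f_proper; rewrite embed_edge.
have [/codomP [i ->] | xK] := boolP (x \in codom K); first by rewrite embed_K.
by rewrite (embed_out _ xK); apply: f_lists.
Qed.

End Glue.

Theorem lemma2 (t : nat) (q : nat) (k : 'I_q -> nat) (Col : finType)
  (V1 : finType) (e1 : rel V1) (V2 : finType) (e2 : rel V2)
  (p : nat) (K : 'I_p -> V1) (C : 'I_q -> {set Col}) (L : V2 -> {set Col}) :
  0 < t ->
  (forall i, 0 < k i) ->
  simple_graph e1 -> K_minor_free e1 t ->
  simple_graph e2 -> K_minor_free e2 t ->
  is_clique e1 K ->
  (forall i j, i != j -> [disjoint C i & C j]) ->
  lambdaC_assignment k C L ->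
  (forall psi : V2 -> Col, L_colouring e2 L psi ->
     exists Kpsi : 'I_p -> V2, is_clique e2 Kpsi /\
       exists Lpsi : V1 -> {set Col},
         obstacle e1 K k C (fun i => psi (Kpsi i)) Lpsi) ->
  exists (V : finType) (e : rel V),
    [/\ simple_graph e, K_minor_free e t & ~ lambda_choosable e k].
Proof.
move=> _ _ e1_simple mf1 e2_simple mf2 K_clique Cdisj LC obst.
pose Phi : finType := {psi : {ffun V2 -> Col} | `[< L_colouring e2 L psi >]}.
have /choice [KL KL_spec] : forall phi : Phi,
    exists KL : ('I_p -> V2) * (V1 -> {set Col}),
      is_clique e2 KL.1 /\ obstacle e1 K k C (fun i => val phi (KL.1 i)) KL.2.
  move=> phi; have [Kpsi [Kpsi_clique [Lpsi ob]]] := obst _ (asboolW (valP phi)).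
  by exists (Kpsi, Lpsi).
have KK_clique phi : is_clique e2 (KL phi).1 by case: (KL_spec phi).
exists (glue_vertex Phi V2 K), (glue_rel e1 e2 (K := K) (fun phi => (KL phi).1)); split.
- exact: glue_simple.
- exact: glue_K_minor_free.
apply: (glue_not_lambda_choosable e1_simple e2_simple K_clique KK_clique
  (LL := fun phi => (KL phi).2) Cdisj LC).
- by move=> phi; case: (KL_spec phi) => _ [].
move=> psi psi_col.
have psiP : `[< L_colouring e2 L [ffun a => psi a] >].
  have [psi_proper psi_in] := psi_col.
  by apply: asboolT; split => [a b ab | a]; rewrite !ffunE; [apply: psi_proper | apply: psi_in].
pose phi : Phi := Sub [ffun a => psi a] psiP.
exists phi; have [_] := KL_spec phi.
by congr obstacle; apply/funext => i; rewrite SubK ffunE.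
Qed.
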